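(* Let $O=\operatorname{Out}^0(A_\Gamma;\mathcal{G},\mathcal{H}^t)$ with $\mathcal{G}$ saturated with respect to $(\mathcal{G},\mathcal{H})$. Let $\operatorname{Aut}(\Gamma)$ be embedded in $\operatorname{Out}(A_\Gamma)$ via permutation of generators and set $\operatorname{Aut}^0(\Gamma)=\operatorname{Aut}(\Gamma)\cap O$. Then $\operatorname{Aut}^0(\Gamma)$ is naturally isomorphic to $\bigoplus_{[v]\in T_\mathcal{G}}\operatorname{Sym}([v])$, i.e. it consists exactly of the graph automorphisms preserving each $\sim$-class setwise, and every permutation of each class (fixing all other vertices) is a graph automorphism lying in $O$.
   Context: $\Gamma$ is a finite simplicial graph with vertex set $V(\Gamma)$. Subgraphs are always full subgraphs and are identified with their vertex sets. $A_\Gamma$ is the right-angled Artin group generated by $V(\Gamma)$ with relations $[v,w]=1$ for adjacent $v,w$. For $\Delta\subseteq\Gamma$, the special subgroup $A_\Delta\le A_\Gamma$ is the subgroup generated by $\Delta$. $\operatorname{lk}(v)$ is the set of vertices adjacent to $v$ and $\operatorname{st}(v)=\operatorname{lk}(v)\cup\{v\}$. An outer automorphism $\Phi$ stabilises a subgroup $H$ if some representative $\phi\in\Phi$ satisfies $\phi(H)=H$, and acts trivially on $H$ if some representative restricts to the identity on $H$. The Laurence generators of $\operatorname{Out}(A_\Gamma)$ are the classes of: inversions $\iota_v$ ($v\mapsto v^{-1}$); transvections $\rho_v^w$ for $v\neq w$ with $\operatorname{lk}(v)\subseteq\operatorname{st}(w)$ ($v\mapsto vw$); partial conjugations $\pi_K^v$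 for $K$ a union of connected components of $\Gamma\setminus\operatorname{st}(v)$ ($u\mapsto vuv^{-1}$ for $u\in K$); all other generators being fixed. $\operatorname{Out}^0(A_\Gamma)$ is the subgroup of $\operatorname{Out}(A_\Gamma)$ generated by these. For families $\mathcal{G},\mathcal{H}$ of special subgroups, $\operatorname{Out}^0(A_\Gamma;\mathcal{G},\mathcal{H}^t)$ is the subgroup of $\operatorname{Out}^0(A_\Gamma)$ consisting of elements stabilising every member of $\mathcal{G}$ and acting trivially on every member of $\mathcal{H}$. $\mathcal{G}$ is saturated with respect to $(\mathcal{G},\mathcal{H})$ if it contains every proper special subgroup of $A_\Gamma$ stabilised by $\operatorname{Out}^0(A_\Gamma;\mathcal{G},\mathcal{H}^t)$. The $\mathcal{G}$-ordering $\preceq$ on $V(\Gamma)$: $v\preceq w$ iff $\operatorname{lk}(v)\subseteq\operatorname{st}(w)$ and for every $A_\Delta\in\mathcal{G}$ with $v\in\Delta$ also $w\in\Delta$; $v\sim w$ iff $v\preceq w$ and $w\preceq v$; $[v]$ denotes the equivalence class and $T_\mathcal{G}$ the set of classes. *)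

From HB Require Import structures.
From mathcomp Require Import all_boot all_fingroup.
Set Implicit Arguments. Unset Strict Implicit. Unset Printing Implicit Defensive.

Section RAAG.
Variables (V : finType) (e : rel V).

(* A letter (v, false) is the generator v, (v, true) is v^{-1}. *)
Definition word := seq (V * bool).
Definition gen (v : V) : word := [:: (v, false)].
Definition winv (w : word) : word := rev (map (fun p => (p.1, ~~ p.2)) w).

(* Equality in A_Gamma: equivalence generated by free cancellation and
   commutation of adjacent generators, in any context. *)
Inductive weq : word -> word -> Prop :=
| weq_refl w : weq w w
| weq_sym w1 w2 : weq w1 w2 -> weq w2 w1
| weq_trans w1 w2 w3 : weq w1 w2 -> weq w2 w3 -> weq w1 w3
| weq_cancel s t v b : weq (s ++ (v, b) :: (v, ~~ b) :: t) (s ++ t)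
| weq_comm s t v w b c : e v w ->
    weq (s ++ (v, b) :: (w, c) :: t) (s ++ (w, c) :: (v, b) :: t).

(* An endomorphism is given by the images of the generators. *)
Definition subst (f : V -> word) (w : word) : word :=
  flatten (map (fun p => if p.2 then winv (f p.1) else f p.1) w).
(* comp g f = g o f  (first f, then g) *)
Definition comp (g f : V -> word) : V -> word := fun v => subst g (f v).
Definition conjw (g x : word) : word := g ++ x ++ winv g.

Definition lk (v : V) : {set V} := [set w | e v w].
Definition st (v : V) : {set V} := v |: lk v.

(* K is a union of connected components of Gamma \ st(v) *)
Definition comp_union (v : V) (K : {set V}) : Prop :=
  K \subset ~: st v /\
  (forall x y, x \in K -> y \notin st v -> e x y -> y \in K).

(* Laurence generators (as automorphisms) together with their inverses. *)
Inductive laurence : (V -> word) -> Prop :=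
| L_inv v :
    laurence (fun u => if u == v then [:: (v, true)] else gen u)
| L_transv v w : v != w -> lk v \subset st w ->
    laurence (fun u => if u == v then [:: (v, false); (w, false)] else gen u)
| L_transv_inv v w : v != w -> lk v \subset st w ->
    laurence (fun u => if u == v then [:: (v, false); (w, true)] else gen u)
| L_pconj v K : comp_union v K ->
    laurence (fun u => if u \in K then conjw (gen v) (gen u) else gen u)
| L_pconj_inv v K : comp_union v K ->
    laurence (fun u => if u \in K then conjw [:: (v, true)] (gen u) else gen u).

(* Representatives (in Aut(A_Gamma)) of elements of Out^0(A_Gamma): the subgroup
   generated by the Laurence generators, up to equality in A_Gamma. *)
Inductive InO : (V -> word) -> Prop :=
| InO_id : InO gen
| InO_mul L f : laurence L -> InO f -> InO (comp L f)
| InO_eq f f' : InO f -> (forall v, weq (f v) (f' v)) -> InO f'.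

Definition inA (D : {set V}) (x : word) : Prop :=
  exists y : word, all (fun p => p.1 \in D) y /\ weq x y.

(* the outer class of f stabilises A_D: some representative c_g o f maps A_D onto A_D *)
Definition stabilises (f : V -> word) (D : {set V}) : Prop :=
  exists g : word,
    let phi := fun u => conjw g (f u) in
    (forall u, u \in D -> inA D (phi u)) /\
    (forall u, u \in D -> exists y : word,
        all (fun p => p.1 \in D) y /\ weq (subst phi y) (gen u)).

Definition acts_trivially (f : V -> word) (D : {set V}) : Prop :=
  exists g : word, forall u, u \in D -> weq (conjw g (f u)) (gen u).

(* Out^0(A_Gamma; G, H^t), special subgroups identified with vertex sets *)
Definition InOGH (G H : {set {set V}}) (f : V -> word) : Prop :=
  InO f /\ (forall D, D \in G -> stabilises f D) /\
  (forall D, D \in H -> acts_trivially f D).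

Definition saturated (G H : {set {set V}}) : Prop :=
  forall D : {set V}, D != setT ->
    (forall f, InOGH G H f -> stabilises f D) -> D \in G.

Definition preceqG (G : {set {set V}}) (v w : V) : bool :=
  (lk v \subset st w) && [forall D in G, (v \in D) ==> (w \in D)].
Definition simG (G : {set {set V}}) (v w : V) : bool :=
  preceqG G v w && preceqG G w v.

Definition graph_aut (s : {perm V}) : Prop := forall u v, e (s u) (s v) = e u v.
Definition perm_outer (s : {perm V}) : V -> word := fun v => gen (s v).

End RAAG.

From Pilot Require Import Defs.
From HB Require Import structures.
From mathcomp Require Import all_boot all_fingroup all_algebra.
Set Implicit Arguments. Unset Strict Implicit. Unset Printing Implicit Defensive.
Import GRing.Theory.

(* Necessity rests on an invariant of Out^0(A_Gamma) read off from the
   abelianisation: the exponent sum of a word in each generator is invariant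
   under the RAAG relations, and every element of Out^0 sends v to a word
   whose exponent sums are supported on vertices x with lk(v) <= st(x), since
   each Laurence generator does and the property is stable under composition.
   So a permutation s in O satisfies v <= s(v) for the G-ordering (membership
   in the G-subgroups comes from the stabilisation condition), and as s has
   finite order this forces s(v) ~ v.

   Sufficiency: a transposition of two ~-equivalent vertices a, b is a product
   of transvections, an inversion and (if a, b are not adjacent) a partial
   conjugation; every class-preserving permutation is a product of such
   transpositions.  It is a graph automorphism, it stabilises each member of G
   because the G-subgroups are unions of classes, and it fixes each vertex u of
   a member of H because saturation puts the singleton {u} into G. *)

Section ExponentSum.
Variables (V : finType) (e : rel V).
Local Open Scope ring_scope.

Lemma nonzero_sum_term (I : finType) (R : zmodType) (F : I -> R) :
  \sum_i F i != 0 -> exists i, F i != 0.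
Proof.
have [i Fi|F0] := pickP (fun i => F i != 0); first by exists i.
by rewrite big1 ?eqxx // => i _; apply/eqP; rewrite -[_ == _]negbK F0.
Qed.

Definition letter_sign (p : V * bool) : int := if p.2 then -1 else 1.

(* expsum w x: the exponent sum of the generator x in the word w, i.e. the
   x-coordinate of the image of w in the abelianisation Z^V. *)
Fixpoint expsum (w : word V) (x : V) : int :=
  if w is p :: w' then (if p.1 == x then letter_sign p else 0) + expsum w' x
  else 0.

Lemma expsum_cat s t x : expsum (s ++ t) x = expsum s x + expsum t x.
Proof. by elim: s => [|p s IH] /=; rewrite ?add0r // IH addrA. Qed.

Lemma expsum_winv w x : expsum (winv w) x = - expsum w x.
Proof.
elim: w => [|p w IH]; first by rewrite oppr0.
rewrite /winv map_cons rev_cons -cats1 expsum_cat -/(winv w) IH /= addr0 opprD.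
by rewrite addrC; case: (p.1 == x); rewrite /letter_sign /=; case: p.2;
  rewrite ?oppr0 ?opprK.
Qed.

Lemma expsum_weq w1 w2 x : weq e w1 w2 -> expsum w1 x = expsum w2 x.
Proof.
elim=> [w|? ? _ IH|? ? ? _ IH1 _ IH2|s t v b|s t v w b c _] //.
- by rewrite IH1 IH2.
- rewrite !expsum_cat /=; congr (_ + _); case: (v == x); rewrite ?add0r //.
  by rewrite addrA /letter_sign; case: b; rewrite /= ?addNr ?subrr add0r.
- by rewrite !expsum_cat /=; congr (_ + _); rewrite addrCA.
Qed.

Lemma expsum_conjw g w x : expsum (conjw g w) x = expsum w x.
Proof. by rewrite /conjw !expsum_cat expsum_winv addrCA subrr addr0. Qed.

Lemma expsum_gen u x : expsum (gen u) x = (u == x)%:R.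
Proof. by rewrite /= addr0; case: (u == x). Qed.

Lemma expsum_support w x : expsum w x != 0 -> x \in map fst w.
Proof.
elim: w => [|p w IH] //=; rewrite in_cons.
by case: (p.1 =P x) => [->|_]; rewrite ?eqxx // add0r => /IH ->; rewrite orbT.
Qed.

Lemma expsum_subst (f : V -> word V) w x :
  expsum (subst f w) x = \sum_y expsum w y * expsum (f y) x.
Proof.
elim: w => [|p w IH] /=; first by rewrite big1 // => y _; rewrite mul0r.
rewrite /subst /= -/(subst f w) expsum_cat IH.
under eq_bigr => y _ do rewrite mulrDl.
rewrite big_split /=; congr (_ + _).
rewrite (bigD1 p.1) //= eqxx big1 ?addr0.
  by rewrite /letter_sign; case: p.2; rewrite ?expsum_winv ?mulN1r ?mul1r.
by move=> y; rewrite eq_sym => /negbTE ->; rewrite mul0r.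
Qed.

End ExponentSum.

Section Domination.
Variables (V : finType) (e : rel V).
Hypothesis e_sym : symmetric e.

Definition dominated (u w : V) : bool := lk e u \subset st e w.

Lemma in_lk u y : (y \in lk e u) = e u y.
Proof. by rewrite inE. Qed.

Lemma in_st u y : (y \in st e u) = (y == u) || e u y.
Proof. by rewrite in_setU1 in_lk. Qed.

Lemma dominated_refl : reflexive dominated.
Proof. by move=> u; apply/subsetP => y; rewrite in_lk in_st orbC => ->. Qed.

(* Transitivity needs the symmetry of e: a neighbour of u may be w itself. *)
Lemma dominated_trans : transitive dominated.
Proof.
move=> w u x /subsetP Huw /subsetP Hwx; apply/subsetP => y; rewrite in_lk => euy.
have := Huw y; rewrite in_lk in_st => /(_ euy) /orP[/eqP yw|ewy]; last first.
  by apply: Hwx; rewrite in_lk.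
subst y; have := Hwx u; rewrite in_lk in_st e_sym => /(_ euy) /orP[/eqP ux|exu].
  by subst u; rewrite in_st euy orbT.
have := Huw x; rewrite in_lk in_st e_sym => /(_ exu) /orP[/eqP xw|ewx].
  by subst x; rewrite in_st eqxx.
by rewrite in_st e_sym ewx orbT.
Qed.

Lemma dominated_adj u w y : dominated u w -> e u y -> (y == w) || e w y.
Proof. by move/subsetP/(_ y); rewrite in_lk in_st; apply. Qed.

Definition dominated_images (f : V -> word V) : Prop :=
  forall v x, expsum (f v) x != 0%R -> dominated v x.

Lemma gen_dominated : dominated_images (@gen V).
Proof.
by move=> u x /expsum_support; rewrite inE => /eqP ->; apply: dominated_refl.
Qed.

(* The Laurence generators (and their inverses) have the invariant: apart from
   conjugating letters, which do not count, they only introduce a vertex w into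
   the image of v when lk(v) <= st(w). *)
Lemma laurence_dominated L : laurence e L -> dominated_images L.
Proof.
case=> [v|v w _ v_dom_w|v w _ v_dom_w|v K _|v K _] u x;
  [| | | by case: (u \in K); rewrite ?expsum_conjw; apply: gen_dominated..].
all: case: (u =P v) => [->|_]; last exact: gen_dominated.
all: move/expsum_support.
- by rewrite inE => /eqP ->; apply: dominated_refl.
- by rewrite !inE => /orP[] /eqP ->; rewrite ?dominated_refl ?v_dom_w.
- by rewrite !inE => /orP[] /eqP ->; rewrite ?dominated_refl ?v_dom_w.
Qed.

(* The invariant is stable under composition, because domination is
   transitive and abelianisation turns composition into a matrix product. *)
Lemma comp_dominated L f :
  dominated_images L -> dominated_images f -> dominated_images (Defs.comp L f).
Proof.
move=> DL Df v x; rewrite /Defs.comp expsum_subst => /nonzero_sum_term [y].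
rewrite mulf_eq0 negb_or => /andP[fvy Lyx].
exact: dominated_trans (Df _ _ fvy) (DL _ _ Lyx).
Qed.

Lemma InO_dominated f : InO e f -> dominated_images f.
Proof.
elim=> [|L g HL _ IH|g g' _ IH Hw].
- exact: gen_dominated.
- exact: comp_dominated (laurence_dominated HL) IH.
- by move=> v x; rewrite -(expsum_weq x (Hw v)); apply: IH.
Qed.

End Domination.

(* A permutation of a finite set moving every point upwards in a preorder
   moves every point to an equivalent one: iterating s brings s(x) back to x. *)
Lemma perm_upward_cycle (T : finType) (r : rel T) (s : {perm T}) :
  reflexive r -> transitive r -> (forall x, r x (s x)) -> forall x, r (s x) x.
Proof.
move=> r_refl r_trans r_up.
have r_iter k x : r x ((s ^+ k)%g x).
  elim: k x => [|k IH] x; first by rewrite expg0 perm1.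
  by rewrite expgS permM; apply: r_trans (r_up x) (IH (s x)).
move=> x; have := r_iter #[s]%g.-1 (s x).
by rewrite -permM -expgS prednK ?order_gt0 // expg_order perm1.
Qed.

Section GOrdering.
Variables (V : finType) (e : rel V).
Hypothesis e_sym : symmetric e.
Variable G : {set {set V}}.

Lemma preceqG_refl : reflexive (preceqG e G).
Proof.
move=> x; apply/andP; split; first exact: dominated_refl.
by apply/forall_inP => D _; apply/implyP.
Qed.

Lemma preceqG_trans : transitive (preceqG e G).
Proof.
move=> y x z /andP[dxy /forall_inP Gxy] /andP[dyz /forall_inP Gyz].
apply/andP; split; first exact: (dominated_trans e_sym dxy dyz).
apply/forall_inP => D HD.
by apply/implyP => /(implyP (Gxy D HD)) /(implyP (Gyz D HD)).
Qed.

Lemma simG_refl x : simG e G x x.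
Proof. by rewrite /simG preceqG_refl. Qed.

Lemma simG_sym x y : simG e G x y = simG e G y x.
Proof. by rewrite /simG andbC. Qed.

Lemma simG_trans : transitive (simG e G).
Proof.
move=> y x z /andP[xy yx] /andP[yz zy].
by rewrite /simG (preceqG_trans xy yz) (preceqG_trans zy yx).
Qed.

Lemma simG_tperm a b x : simG e G a b -> simG e G (tperm a b x) x.
Proof.
by move=> ab; case: tpermP => [->|->|_ _]; rewrite ?simG_refl // simG_sym.
Qed.

Lemma simG_dominated x y : simG e G x y -> dominated e x y /\ dominated e y x.
Proof. by case/andP => /andP[xy _] /andP[yx _]. Qed.

Lemma simG_mem x y D : simG e G x y -> D \in G -> (x \in D) = (y \in D).
Proof.
case/andP => /andP[_ /forall_inP Gxy] /andP[_ /forall_inP Gyx] HD.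
by apply/idP/idP; [apply/implyP: (Gxy D HD)|apply/implyP: (Gyx D HD)].
Qed.

(* A permutation of the vertices lying in O moves every vertex upwards in the
   G-ordering: lk(v) <= st(s v) by the domination invariant, and every member
   of G containing v contains s v because some conjugate of the permutation
   maps v into it. *)
Lemma InOGH_perm_upward (H : {set {set V}}) (s : {perm V}) :
  InOGH e G H (perm_outer s) -> forall v, preceqG e G v (s v).
Proof.
case=> InO_s [stab_s _] v; apply/andP; split.
  by apply: (InO_dominated e_sym InO_s); rewrite expsum_gen eqxx.
apply/forall_inP => D HD; apply/implyP => vD.
have [g [maps_into _]] := stab_s D HD.
have [y [y_in_D y_eq]] := maps_into v vD.
have : expsum y (s v) != 0%R.
  by rewrite -(expsum_weq _ y_eq) expsum_conjw expsum_gen eqxx.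
by move/expsum_support/mapP => [p py ->]; apply: (allP y_in_D).
Qed.

Lemma InOGH_perm_sim (H : {set {set V}}) (s : {perm V}) :
  InOGH e G H (perm_outer s) -> forall v, simG e G (s v) v.
Proof.
move=> InOGH_s v; have up := InOGH_perm_upward InOGH_s.
by rewrite /simG up (perm_upward_cycle preceqG_refl preceqG_trans up).
Qed.

End GOrdering.

Section Transposition.
Variables (V : finType) (e : rel V).
Hypothesis e_sym : symmetric e.

Lemma weq_reduce_cancel s t v b w :
  weq e (s ++ t) w -> weq e (s ++ (v, b) :: (v, ~~ b) :: t) w.
Proof. by apply: weq_trans; apply: weq_cancel. Qed.

Lemma weq_reduce_comm s t v u b c w : e v u ->
  weq e (s ++ (u, c) :: (v, b) :: t) w -> weq e (s ++ (v, b) :: (u, c) :: t) w.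
Proof. by move=> evu; apply: weq_trans; apply: weq_comm. Qed.

Variables (a b : V).
Hypotheses (a_neq_b : a != b) (a_dom_b : dominated e a b) (b_dom_a : dominated e b a).

Let b_neq_a : b != a. Proof. by rewrite eq_sym. Qed.

(* For adjacent a, b the transposition (a b) is the composite
     rho_a^b o (rho_b^a)^-1 o rho_a^b o iota_b :
   a |-> a b b b^-1 a^-1 = a b a^-1 = b (a and b commute) and b |-> a b b^-1 = a. *)
Lemma transposition_adjacent_InO (s : {perm V}) : e a b ->
  InO e (perm_outer s) -> InO e (perm_outer (s * tperm a b)%g).
Proof.
move=> eab InO_s.
apply: (InO_eq (InO_mul (L_transv a_neq_b a_dom_b)
         (InO_mul (L_transv_inv b_neq_a b_dom_a)
         (InO_mul (L_transv a_neq_b a_dom_b) (InO_mul (L_inv e b) InO_s))))) => v.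
rewrite /Defs.comp /perm_outer permM.
case: (tpermP a b (s v)) => [->|->|/eqP/negbTE sva /eqP/negbTE svb];
  rewrite /subst /=; do 4! rewrite ?eqxx ?(negbTE a_neq_b) ?(negbTE b_neq_a) ?sva ?svb /=.
- apply: (weq_reduce_cancel (s := [:: (a, false); (b, false)]) b false).
  apply: (weq_reduce_comm (s := [::]) eab).
  by apply: (weq_reduce_cancel (s := [:: (b, false)]) a false); apply: weq_refl.
- by apply: (weq_reduce_cancel (s := [:: (a, false)]) b false); apply: weq_refl.
- exact: weq_refl.
Qed.

(* If a, b are not adjacent, {a} is a component of Gamma \ st(b), since every
   neighbour of a lies in st(b). *)
Lemma singleton_comp_union : ~~ e a b -> comp_union e b [set a].
Proof.
move=> eab; split.
  by rewrite sub1set !inE negb_or a_neq_b e_sym eab.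
move=> x y; rewrite inE => /eqP -> y_nst eay.
by move/subsetP: a_dom_b => /(_ y); rewrite in_lk eay (negbTE y_nst) => /(_ isT).
Qed.

(* For non-adjacent a, b we first conjugate a by b^-1 (a partial conjugation)
   and then apply the composite of the adjacent case; the image of a becomes
   b b^-1 a^-1 a b b b^-1 a^-1 a b b^-1, which freely reduces to b, and b is
   still sent to a b b^-1 = a. *)
Lemma transposition_nonadjacent_InO (s : {perm V}) : ~~ e a b ->
  InO e (perm_outer s) -> InO e (perm_outer (s * tperm a b)%g).
Proof.
move=> eab InO_s.
apply: (InO_eq (InO_mul (L_transv a_neq_b a_dom_b)
         (InO_mul (L_transv_inv b_neq_a b_dom_a)
         (InO_mul (L_transv a_neq_b a_dom_b) (InO_mul (L_inv e b)
         (InO_mul (L_pconj_inv (singleton_comp_union eab)) InO_s)))))) => v.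
rewrite /Defs.comp /perm_outer permM.
case: (tpermP a b (s v)) => [->|->|/eqP/negbTE sva /eqP/negbTE svb];
  rewrite /subst /=;
  do 5! rewrite ?inE ?eqxx ?(negbTE a_neq_b) ?(negbTE b_neq_a) ?sva ?svb /=.
- apply: (weq_reduce_cancel (s := [::]) b false).
  apply: (weq_reduce_cancel (s := [::]) a true).
  apply: (weq_reduce_cancel (s := [:: (b, false)]) b false).
  apply: (weq_reduce_cancel (s := [:: (b, false)]) a true).
  by apply: (weq_reduce_cancel (s := [:: (b, false)]) b false); apply: weq_refl.
- by apply: (weq_reduce_cancel (s := [:: (a, false)]) b false); apply: weq_refl.
- exact: weq_refl.
Qed.

Lemma transposition_InO (s : {perm V}) :
  InO e (perm_outer s) -> InO e (perm_outer (s * tperm a b)%g).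
Proof.
case: (boolP (e a b)) => eab.
  exact: transposition_adjacent_InO.
exact: transposition_nonadjacent_InO.
Qed.

End Transposition.

(* Composing s with the transposition (a s(a)), for a point a moved by s,
   strictly shrinks the set of moved points: a becomes fixed, and no fixed
   point of s is disturbed. *)
Lemma tperm_shrinks_support (T : finType) (s : {perm T}) a : s a != a ->
  [set x | (s * tperm a (s a))%g x != x] \proper [set x | s x != x].
Proof.
move=> sa_a; apply/properP; split; last first.
  by exists a; rewrite !inE ?sa_a // permM tpermR eqxx.
apply/subsetP => x; rewrite !inE; apply: contra => /eqP sx.
have x_a : a != x by apply: contraNneq sa_a => ax; rewrite ax sx.
have x_sa : s a != x.
  by apply: contraNneq sa_a => sa_x; apply/eqP/(@perm_inj _ s); rewrite sa_x sx.
by rewrite permM sx tpermD.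
Qed.

Section ClassPreserving.
Variables (V : finType) (e : rel V).
Hypotheses (e_sym : symmetric e) (e_irr : irreflexive e).
Variables (G H : {set {set V}}).
Hypothesis G_saturated : saturated e G H.

(* A class-preserving permutation lies in Out^0: peel off one transposition
   (a s(a)) of equivalent vertices at a time, by induction on the number of
   moved points. *)
Lemma class_perm_InO (s : {perm V}) :
  (forall v, simG e G (s v) v) -> InO e (perm_outer s).
Proof.
have [n] := ubnP #|[set x | s x != x]|; elim: n s => // n IH s supp_s s_sim.
have [/eqP supp0|/set0Pn [a]] := boolP ([set x | s x != x] == set0).
  apply: (InO_eq (InO_id e)) => v.
  have : v \notin [set x | s x != x] by rewrite supp0 inE.
  by rewrite inE negbK => /eqP sv; rewrite /perm_outer sv; apply: weq_refl.
rewrite inE => sa_a; set t := tperm a (s a).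
have s't_sim v : simG e G ((s * t)%g v) v.
  rewrite permM; apply: (simG_trans e_sym _ (s_sim v)).
  by apply: simG_tperm; rewrite simG_sym.
have InO_st : InO e (perm_outer (s * t)%g).
  apply: IH s't_sim.
  exact: leq_trans (proper_card (tperm_shrinks_support sa_a)) (ltnSE supp_s).
have [sa_dom_a a_dom_sa] := simG_dominated (s_sim a).
have a_sa : a != s a by rewrite eq_sym.
have := transposition_InO e_sym a_sa a_dom_sa sa_dom_a InO_st.
by rewrite -mulgA tperm2 mulg1.
Qed.

(* A class-preserving permutation maps edges to edges: each vertex is
   dominated by its image, and irreflexivity rules out the degenerate cases. *)
Lemma class_perm_edge (s : {perm V}) :
  (forall v, simG e G (s v) v) -> forall u v, e u v -> e (s u) (s v).
Proof.
move=> s_sim; have up x : dominated e x (s x) by have [] := simG_dominated (s_sim x).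
have s_neq u v : e u v -> s u != s v.
  by apply: contraTneq => /perm_inj ->; rewrite e_irr.
move=> u v euv; have evu : e v u by rewrite e_sym.
case/orP: (dominated_adj (up u) euv) => [/eqP v_su|esu_v].
  case/orP: (dominated_adj (up v) evu) => [/eqP u_sv|esv_u].
    by rewrite -v_su -u_sv.
  have eusv : e u (s v) by rewrite e_sym.
  case/orP: (dominated_adj (up u) eusv) => // /eqP sv_su.
  by move: (s_neq _ _ euv); rewrite sv_su eqxx.
have evsu : e v (s u) by rewrite e_sym.
case/orP: (dominated_adj (up v) evsu) => [/eqP su_sv|]; last by rewrite e_sym.
by move: (s_neq _ _ euv); rewrite su_sv eqxx.
Qed.

(* s^-1 preserves the classes as well, so s also reflects edges. *)
Lemma class_perm_graph_aut (s : {perm V}) :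
  (forall v, simG e G (s v) v) -> graph_aut e s.
Proof.
move=> s_sim u v; apply/idP/idP; last exact: class_perm_edge.
have sV_sim w : simG e G ((s^-1)%g w) w.
  by have := s_sim ((s^-1)%g w); rewrite permKV simG_sym.
by move/(class_perm_edge sV_sim); rewrite !permK.
Qed.

(* The members of G are unions of classes, so s maps each of them onto itself. *)
Lemma class_perm_stabilises (s : {perm V}) D :
  (forall v, simG e G (s v) v) -> D \in G -> stabilises e (perm_outer s) D.
Proof.
move=> s_sim HD; exists [::]; split => u uD.
  exists (gen (s u)); split; last exact: weq_refl.
  by rewrite /= andbT (simG_mem (s_sim u) HD).
exists (gen ((s^-1)%g u)); split.
  by rewrite /= andbT -(simG_mem (s_sim _) HD) permKV.
by rewrite /subst /perm_outer /= permKV; apply: weq_refl.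
Qed.

(* Every vertex u of a member D of H is its own class: each element of O acts
   trivially on D, hence stabilises the singleton {u}, so by saturation {u} is
   a member of G (unless it is the whole vertex set). *)
Lemma acts_trivially_singleton_class D u v :
  D \in H -> u \in D -> simG e G v u -> v = u.
Proof.
move=> HD uD vu; apply/set1P.
have [/eqP ->|u_proper] := boolP ([set u] == setT); first by rewrite inE.
suff u_in_G : [set u] \in G by rewrite (simG_mem vu u_in_G) set11.
apply: (G_saturated u_proper) => f [_ [_ triv_f]].
have [g fix_D] := triv_f D HD.
exists g; split => x; rewrite inE => /eqP ->; exists (gen u); split;
  rewrite /= ?inE ?eqxx //.
- exact: fix_D.
- by rewrite /subst /= cats0; exact: fix_D.
Qed.

Lemma class_perm_acts_trivially (s : {perm V}) D :
  (forall v, simG e G (s v) v) -> D \in H -> acts_trivially e (perm_outer s) D.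
Proof.
move=> s_sim HD; exists [::] => u uD.
by rewrite /conjw /perm_outer /= (acts_trivially_singleton_class HD uD (s_sim u));
  apply: weq_refl.
Qed.

End ClassPreserving.

Theorem lemma7p7 (V : finType) (e : rel V) (e_sym : symmetric e) (e_irr : irreflexive e)
  (G H : {set {set V}}) (hsat : saturated e G H) :
  (forall s : {perm V}, graph_aut e s ->
     (InOGH e G H (perm_outer s) <-> forall v, simG e G (s v) v)) /\
  (forall s : {perm V}, (forall v, simG e G (s v) v) ->
     graph_aut e s /\ InOGH e G H (perm_outer s)).
Proof.
have class_perm_in_O (s : {perm V}) :
    (forall v, simG e G (s v) v) -> InOGH e G H (perm_outer s).
  move=> s_sim; split; first exact: (class_perm_InO e_sym s_sim).
  split=> D HD; first exact: class_perm_stabilises.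
  exact: (class_perm_acts_trivially hsat s_sim HD).
split=> s.
  by move=> _; split; [exact: (InOGH_perm_sim e_sym) | exact: class_perm_in_O].
move=> s_sim; split; last exact: class_perm_in_O.
exact: (class_perm_graph_aut e_sym e_irr s_sim).
Qed.
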